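(* Let $\xi>0$, $v_2<v_1$ with either $v_2<0<v_1$ or $0<v_2<v_1$, $q\in[0,1]$, and for $\lambda>0$ let $\tilde p(x,t)$ be the (generalized) density of the position $\tilde X(t)$ of the extended telegraph process driven by GCPs with parameter $\lambda$ with Poissonian resets to the origin at rate $\xi$, with $\tilde X(0)=0$ and random initial velocity $V_0$, $P\{V_0=v_1\}=q=1-P\{V_0=v_2\}$. Then for $t>0$ and $v_2t<x<v_1t$, $$ \lim_{\lambda\to+\infty}\tilde p(x,t)=\mathbb 1_{\{v_2t<x<v_1t\}}\frac{e^{-\xi t}}{(v_1-v_2)t}+\frac{\xi}{v_1-v_2}\boldsymbol I(x,t)\Gamma^\xi(x,t), $$ where $\Gamma^\xi(x,t)=\Gamma[0,M_x\xi,t\xi]$ if $v_2<0<v_1$ and $\Gamma^\xi(x,t)=\Gamma[0,\frac x{v_1}\xi,m_{x,t}\xi]$ if $0<v_2<v_1$.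
   Context: GCP with intensity $\lambda>0$: a Poisson process whose rate is random, exponentially distributed with mean $\lambda$; increments satisfy $P\{\tilde N_\lambda(t+s)-\tilde N_\lambda(t)=k\}=\frac{1}{1+\lambda s}(\frac{\lambda s}{1+\lambda s})^k$. The process: a particle starts at the origin with initial velocity $V(0)$ ($v_1,v_2\ne0$, $v_2<v_1$), moves with velocity alternating between $v_1$ and $v_2$, the periods at velocity $v_1$ and at $v_2$ being governed by two independent GCPs of intensity $\lambda$; additionally it is instantaneously reset to the origin at the epochs of an independent Poisson process of rate $\xi$, restarting afresh with its initial velocity. Conditional on $V(0)=v_j$, the density is $\tilde p(x,t|v_j)=e^{-\xi t}p(x,t|v_j)+\xi\int_0^te^{-\xi s}p(x,s|v_j)ds$, where $p(x,t|v_j)=\frac{\delta(x-v_jt)}{1+\lambda t}+\mathbb 1_{\{v_2t<x<v_1t\}}\frac{\lambda}{(v_1-v_2)(1+\lambda t)}$; $\tilde p(x,t)=q\tilde p(x,t|v_1)+(1-q)\tilde p(x,t|v_2)$. Notation: $M_x=\max\{x/v_1,x/v_2\}$, $m_{x,t}=\min\{x/v_2,t\}$, $\Gamma(a,z_0,z_1)=\int_{z_0}^{z_1}s^{a-1}e^{-s}ds$, $\boldsymbol I(x,t)=\mathbb 1_{\{\min\{v_2t,0\}<x<v_1t\}}$. *)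

From HB Require Import structures.
From mathcomp Require Import all_boot all_order all_algebra.
From mathcomp Require Import all_classical all_reals all_analysis.
Set Implicit Arguments. Unset Strict Implicit. Unset Printing Implicit Defensive.
Import Order.TTheory GRing.Theory Num.Theory.
Import numFieldNormedType.Exports.
Local Open Scope classical_set_scope.
Local Open Scope ring_scope.

Section Defs.
Variable R : realType.
Local Notation mu := (@lebesgue_measure R).

(* Incomplete gamma integral Gamma(a,z0,z1) = int_{z0}^{z1} s^(a-1) e^(-s) ds,
   as an extended real (it is +oo e.g. for a = 0, z0 = 0 < z1). Here a = 0. *)
Definition Gamma0 (z0 z1 : R) : \bar R :=
  (\int[mu]_(s in `[z0, z1]) ((s ^-1) * expR (- s))%:E)%E.

(* Absolutely continuous part of p(x,s|v_j):
   1_{v2 s < x < v1 s} * lam / ((v1 - v2) (1 + lam s)). *)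
Definition p_ac (v1 v2 lam x s : R) : R :=
  if (v2 * s < x) && (x < v1 * s) then lam / ((v1 - v2) * (1 + lam * s)) else 0.

(* The integral  int_0^t g(s) delta(x - vj s) ds  of a test function against
   the Dirac mass delta(x - vj s) (vj <> 0): the Dirac delta in s is
   concentrated at s = x/vj with weight 1/|vj|. *)
Definition dirac_int (g : R -> R) (vj x t : R) : R :=
  if (0 < x / vj) && (x / vj < t) then g (x / vj) / `|vj| else 0.

(* Density (w.r.t. Lebesgue measure in x) of
   ptilde(x,t|vj) = e^{-xi t} p(x,t|vj) + xi int_0^t e^{-xi s} p(x,s|vj) ds
   at a point x of the open interval v2 t < x < v1 t, where the singular
   term e^{-xi t} delta(x - vj t)/(1 + lam t) vanishes. *)
Definition ptilde_cond (xi v1 v2 lam vj x t : R) : \bar R :=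
  ((expR (- xi * t) * p_ac v1 v2 lam x t)%:E
   + xi%:E * (\int[mu]_(s in `[0%R, t]) (expR (- xi * s) * p_ac v1 v2 lam x s)%:E)
   + (xi * dirac_int (fun s => expR (- xi * s) / (1 + lam * s)) vj x t)%:E)%E.

Definition ptilde (xi v1 v2 q lam x t : R) : \bar R :=
  (q%:E * ptilde_cond xi v1 v2 lam v1 x t
   + (1 - q)%:E * ptilde_cond xi v1 v2 lam v2 x t)%E.

Definition M_x (v1 v2 x : R) : R := Num.max (x / v1) (x / v2).
Definition m_xt (v2 x t : R) : R := Num.min (x / v2) t.
Definition I_xt (v1 v2 x t : R) : R :=
  if (Num.min (v2 * t) 0 < x) && (x < v1 * t) then 1 else 0.

Definition Gamma_xi (xi v1 v2 x t : R) : \bar R :=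
  if v2 < 0 then Gamma0 (M_x v1 v2 x * xi) (t * xi)
  else Gamma0 (x / v1 * xi) (m_xt v2 x t * xi).

Definition limit_density (xi v1 v2 x t : R) : \bar R :=
  ((if (v2 * t < x) && (x < v1 * t) then expR (- xi * t) / ((v1 - v2) * t) else 0)%:E
   + (xi / (v1 - v2))%:E * (I_xt v1 v2 x t)%:E * Gamma_xi xi v1 v2 x t)%E.

End Defs.

From HB Require Import structures.
From mathcomp Require Import all_boot all_order all_algebra.
From mathcomp Require Import all_classical all_reals all_analysis.
From mathcomp Require Import measurable_realfun.
From mathcomp Require Import ring lra.
Import Order.TTheory GRing.Theory Num.Theory.
Import numFieldNormedType.Exports.
Local Open Scope classical_set_scope.
Local Open Scope ring_scope.

(* For v2 t < x < v1 t the singular part of ptilde vanishes, and for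
   0 <= s <= t the point x lies in the support (v2 s, v1 s) of p(., s) exactly
   when s > a, where a = M_x if v2 < 0 and a = x / v1 if v2 > 0.  As lam -> +oo
   the density lam / ((v1 - v2) (1 + lam s)) increases to 1 / ((v1 - v2) s),
   while the Dirac contributions carry the factor 1 / (1 + lam s) -> 0.
   Monotone convergence gives the limit xi / (v1 - v2) int_a^t e^(-xi s) / s ds
   of the reset term, and the substitution u = xi s turns it into
   xi / (v1 - v2) Gamma(0, a xi, t xi), which is +oo when a = 0. *)

Section rational_limits.
Context {R : realType}.

Lemma invr1DM_cvgy0 {s : R} : 0 < s -> (1 + lam * s)^-1 @[lam --> +oo] --> 0.
Proof.
move=> s0; apply/gtr0_cvgV0.
  near=> lam.
  have lam0 : 0 <= lam by near: lam; apply: nbhs_pinfty_ge; rewrite num_real.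
  by rewrite ltr_pwDl // mulr_ge0 // ltW.
exact: cvg_comp (gt0_cvgMly s0 cvg_id) (cvg_addrl 1).
Unshelve. all: by end_near. Qed.

Lemma divr1DM_cvgy (c s : R) : 0 < s ->
  lam / (c * (1 + lam * s)) @[lam --> +oo] --> (c * s)^-1.
Proof.
move=> s0.
have lim_inv := invr1DM_cvgy0 s0.
have L : c^-1 * (s^-1 * (1 - (1 + lam * s)^-1)) @[lam --> +oo] -->
         c^-1 * (s^-1 * (1 - 0)).
  apply: cvgM; first exact: cvg_cst.
  by apply: cvgM; [exact: cvg_cst | apply: cvgB => //; exact: cvg_cst].
rewrite subr0 mulr1 -invfM in L.
apply: cvg_trans L; apply: near_eq_cvg; near=> lam.
have lam0 : 0 < lam by near: lam; apply: nbhs_pinfty_gt; rewrite num_real.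
have h : 1 + lam * s != 0 by rewrite gt_eqF // ltr_pwDl // mulr_ge0 // ltW.
rewrite invfM [RHS]mulrCA; congr (_ * _).
by field; rewrite h gt_eqF.
Unshelve. all: by end_near. Qed.

Lemma ler_divr1DM (s l1 l2 : R) : 0 <= s -> 0 <= l1 -> l1 <= l2 ->
  l1 / (1 + l1 * s) <= l2 / (1 + l2 * s).
Proof.
move=> s0 l10 l12.
have h1 : 0 < 1 + l1 * s by rewrite ltr_pwDl // mulr_ge0.
have h2 : 0 < 1 + l2 * s by rewrite ltr_pwDl // mulr_ge0 // (le_trans l10).
by rewrite ler_pdivrMr // mulrAC ler_pdivlMr //; nra.
Qed.

Lemma dirac_int_cvgy0 (h : R -> R) (vj x t : R) :
  dirac_int (fun s => h s / (1 + lam * s)) vj x t @[lam --> +oo] --> 0.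
Proof.
rewrite /dirac_int; have [/andP[x_gt0 _]|_] := boolP ((0 < x / vj) && (x / vj < t));
  last exact: cvg_cst.
have L : h (x / vj) / (1 + lam * (x / vj)) / `|vj| @[lam --> +oo] -->
         h (x / vj) * 0 / `|vj|.
  apply: cvgM; last exact: cvg_cst.
  by apply: cvgM; [exact: cvg_cst | exact: invr1DM_cvgy0].
by rewrite mulr0 mul0r in L.
Qed.

End rational_limits.

Section monotone_convergence_cvgy.
Local Open Scope ereal_scope.
Context d (T : measurableType d) (R : realType).
Variables (mu : {measure set T -> \bar R}) (D : set T) (mD : measurable D).
Variables (f : R -> T -> \bar R) (g : T -> \bar R).
Hypothesis mf : forall lam, (0 <= lam)%R -> measurable_fun D (f lam).
Hypothesis f_ge0 : forall lam x, (0 <= lam)%R -> D x -> 0 <= f lam x.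
Hypothesis f_nd : forall x l1 l2, D x -> (0 <= l1 <= l2)%R -> f l1 x <= f l2 x.
Hypothesis f_cvg : forall x, D x -> f lam x @[lam --> +oo%R] --> g x.

Lemma monotone_convergence_cvgy :
  \int[mu]_(x in D) f lam x @[lam --> +oo%R] --> \int[mu]_(x in D) g x.
Proof.
(* The hypotheses only control f on lam >= 0, hence the clamp at 0. *)
pose G (lam : R) := \int[mu]_(x in D) f (Num.max lam 0)%R x.
have max_ge0 (lam : R) : (0 <= Num.max lam 0)%R by rewrite le_max lexx orbT.
have G_nd : nondecreasing_fun G.
  move=> l1 l2 l12; apply: ge0_le_integral => //.
  - by move=> x Dx; exact: f_ge0.
  - exact: mf.
  - exact: mf.
  - by move=> x Dx; apply: f_nd => //; rewrite max_ge0 le_max2.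
have G_sup := nondecreasing_cvge G_nd.
have G_int : G n%:R @[n --> \oo] --> \int[mu]_(x in D) g x.
  have -> : (fun n : nat => G n%:R) = (fun n => \int[mu]_(x in D) f n%:R x).
    by apply/funext => n; rewrite /G max_l.
  have -> : \int[mu]_(x in D) g x = \int[mu]_(x in D) limn (fun n => f n%:R x).
    apply: eq_integral => x /[!inE] Dx; apply/esym/cvg_lim => //.
    exact: (cvg_comp _ _ cvgr_idn (f_cvg _ Dx)).
  apply: cvg_monotone_convergence => //.
  - by move=> n; apply: mf.
  - by move=> n x Dx; apply: f_ge0.
  - by move=> x Dx m n mn; apply: f_nd => //; rewrite ler0n ler_nat.
rewrite -(cvg_unique _ (cvg_comp _ _ cvgr_idn G_sup) G_int).
apply: cvg_trans G_sup; apply: near_eq_cvg; near=> lam.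
have lam_ge0 : (0 <= lam)%R by near: lam; apply: nbhs_pinfty_ge; rewrite num_real.
by rewrite /G max_l.
Unshelve. all: by end_near. Qed.

End monotone_convergence_cvgy.

Section lebesgue_dilation.
Context {R : realType}.
Local Notation mu := (@lebesgue_measure R).

Lemma measurable_invr : measurable_fun [set: R] GRing.inv.
Proof.
have -> : [set: R] = [set x | x != 0] `|` [set 0].
  by apply/seteqP; split=> y // _; case: (eqVneq y 0) => [->|]; [right|left].
apply/(measurable_funU _ (open_measurable (@open_neq R 0)) (measurable_set1 0)).
split; last exact: measurable_fun_set1.
apply: open_continuous_measurable_fun; first exact: open_neq.
by move=> y; rewrite inE => /inv_continuous.
Qed.

Let dilation (c : R) : measurableTypeR R -> measurableTypeR R := *%R^~ c.

Let measurable_dilation (c : R) : measurable_fun [set: measurableTypeR R] (dilation c).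
Proof. by apply: measurable_funM => //; exact: measurable_cst. Qed.

Lemma ge0_integral_dilation (c : R) (D : set R) (f : R -> \bar R) :
  0 < c -> measurable D -> measurable_fun [set: R] f -> (forall u, D u -> 0 <= f u)%E ->
  (\int[mu]_(u in D) f u = c%:E * \int[mu]_(s in ( *%R^~ c) @^-1` D) f (s * c)%R)%E.
Proof.
move=> c0 mD mf f0.
(* The measure structure of a pushforward depends on a measurability proof,
   which nu0 abstracts. *)
pose nu0 := mscale (NngNum (ltW c0)) (pushforward mu (dilation c)).
pose nu := nu0 (measurable_dilation c).
have mu_nu : forall A, measurable A -> mu A = nu A.
  apply: lebesgue_measure_unique => _ [[a b] _ <-].
  change (mu `]a, b] = c%:E * mu (dilation c @^-1` `]a, b]))%E.
  have -> : dilation c @^-1` `]a, b] = `]a / c, b / c]%classic.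
    by apply/seteqP; split => y /=; rewrite !in_itv /= ltr_pdivrMr // ler_pdivlMr.
  rewrite !lebesgue_measure_itv /= !lte_fin ltr_pM2r ?invr_gt0 //.
  case: ifPn => ab; last by rewrite mule0.
  by rewrite -!EFinD -EFinM -mulrBl mulrCA divff ?gt_eqF // mulr1.
rewrite (eq_measure_integral nu); last by move=> A mA _; exact: mu_nu.
rewrite ge0_integral_mscale //; last exact: measurable_funTS.
rewrite ge0_integral_pushforward //; first exact: measurable_funTS.
by move=> u /[!inE]; exact: f0.
Qed.

Lemma Gamma0_dilation (xi a b : R) : 0 < xi -> 0 <= a ->
  Gamma0 (a * xi) (b * xi) = (\int[mu]_(s in `[a, b]) (s^-1 * expR (- xi * s))%:E)%E.
Proof.
move=> xi0 a0.
have mf : measurable_fun [set: R] (fun u : R => (u^-1 * expR (- u))%:E).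
  apply/measurable_EFinP; apply: measurable_funM; first exact: measurable_invr.
  exact: measurableT_comp.
rewrite /Gamma0 (ge0_integral_dilation _ _ _ xi0) //; last first.
  move=> u /= /[!in_itv] /andP[au _]; rewrite lee_fin mulr_ge0 ?expR_ge0 // invr_ge0.
  by apply: le_trans au; rewrite mulr_ge0 // ltW.
have -> : ( *%R^~ xi) @^-1` `[a * xi, b * xi] = `[a, b]%classic.
  by apply/seteqP; split => s /=; rewrite !in_itv /= !ler_pM2r.
rewrite -ge0_integralZl //; last 3 first.
- exact: (measurable_funTS (measurableT_comp mf (measurable_dilation xi))).
- move=> s /= /[!in_itv] /andP[a_le_s _]; rewrite lee_fin mulr_ge0 ?expR_ge0 // invr_ge0.
  by rewrite mulr_ge0 ?(le_trans a0 a_le_s) // ltW.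
- by rewrite lee_fin ltW.
apply: eq_integral => s _; rewrite -EFinM; congr EFin.
by rewrite invfM -mulrA mulrCA mulVKf ?gt_eqF // mulNr (mulrC xi s).
Qed.

Lemma integral_indicator_Gamma0 (xi a t K : R) : 0 < xi -> 0 <= a -> 0 < K ->
  (\int[mu]_(s in `[0%R, t]) (expR (- xi * s) * (if a < s then (K * s)^-1 else 0))%:E =
   (K^-1)%:E * Gamma0 (a * xi) (t * xi))%E.
Proof.
move=> xi0 a0 K0.
have mg : measurable_fun [set: R] (fun s : R => (s^-1 * expR (- xi * s))%:E).
  apply/measurable_EFinP; apply: measurable_funM; first exact: measurable_invr.
  exact: measurableT_comp.
rewrite Gamma0_dilation // -integral_itv_obnd_cbnd; last exact: measurable_funTS.
rewrite -ge0_integralZl //; last 3 first.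
- exact: measurable_funTS.
- move=> s /= /[!in_itv] /andP[a_lt_s _]; rewrite lee_fin mulr_ge0 ?expR_ge0 // invr_ge0.
  exact: ltW (le_lt_trans a0 a_lt_s).
- by rewrite lee_fin invr_ge0 ltW.
rewrite [LHS]integral_mkcond [RHS]integral_mkcond; apply: eq_integral => s _.
rewrite !patchE !mem_setE !in_itv /=.
have [a_lt_s|s_le_a] := ltP a s; last by rewrite mulr0; case: ifP.
rewrite (ltW (le_lt_trans a0 a_lt_s)) /=; case: ifP => // _.
by rewrite -EFinM invfM mulrC mulrA.
Qed.

End lebesgue_dilation.

(* The lower limit of Gamma^xi(x, t), divided by xi. *)
Definition entry_time {R : realType} (v1 v2 x : R) : R :=
  if v2 < 0 then M_x v1 v2 x else x / v1.

Section resetting_telegraph_limit.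
Context {R : realType} {xi v1 v2 t x : R}.
Hypotheses (xi_gt0 : 0 < xi) (v2_lt_v1 : v2 < v1) (v1_gt0 : 0 < v1) (v2_neq0 : v2 != 0).
Hypotheses (t_gt0 : 0 < t) (v2t_lt_x : v2 * t < x) (x_lt_v1t : x < v1 * t).
Local Notation mu := (@lebesgue_measure R).

Local Notation a := (entry_time v1 v2 x).

Let K_gt0 : 0 < v1 - v2. Proof. by rewrite subr_gt0. Qed.

Let v2_gt0_of_ge0 : ~~ (v2 < 0) -> 0 < v2.
Proof. by rewrite -leNgt le_eqVlt eq_sym (negbTE v2_neq0). Qed.

Lemma entry_time_ge0 : 0 <= a.
Proof.
rewrite /entry_time; case: ifPn => [v2_lt0|/v2_gt0_of_ge0 v2_gt0].
  rewrite /M_x le_max; have [x_ge0|x_lt0] := leP 0 x.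
    by rewrite divr_ge0 // ltW.
  by rewrite orbC ler_ndivlMr // mul0r ltW.
by rewrite divr_ge0 // ltW // (le_lt_trans _ v2t_lt_x) // mulr_ge0 // ltW.
Qed.

Lemma inside_cone_entry_time s : 0 <= s <= t ->
  ((v2 * s < x) && (x < v1 * s)) = (a < s).
Proof.
case/andP=> s_ge0 s_le_t; rewrite /entry_time; case: ifPn => [v2_lt0|/v2_gt0_of_ge0 v2_gt0].
  by rewrite /M_x gt_max ltr_pdivrMr // ltr_ndivrMr // andbC (mulrC s v1) (mulrC s v2).
have -> : v2 * s < x by apply: le_lt_trans v2t_lt_x; rewrite ler_wpM2l // ltW.
by rewrite ltr_pdivrMr // mulrC.
Qed.

Lemma Gamma_xi_entry_time : Gamma_xi xi v1 v2 x t = Gamma0 (a * xi) (t * xi).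
Proof.
rewrite /Gamma_xi /entry_time; case: ifPn => // /v2_gt0_of_ge0 v2_gt0.
by rewrite /m_xt min_r // ler_pdivlMr // mulrC ltW.
Qed.

Lemma limit_densityE : limit_density xi v1 v2 x t =
  ((expR (- xi * t) / ((v1 - v2) * t))%:E + xi%:E *
   \int[mu]_(s in `[0%R, t])
      (expR (- xi * s) * (if a < s then ((v1 - v2) * s)^-1 else 0))%:E)%E.
Proof.
rewrite /limit_density v2t_lt_x x_lt_v1t /I_xt gt_min v2t_lt_x x_lt_v1t /=.
rewrite Gamma_xi_entry_time integral_indicator_Gamma0 // ?entry_time_ge0 //.
by rewrite mule1 muleA -EFinM.
Qed.

Lemma limit_density_ge0 : (0 <= limit_density xi v1 v2 x t)%E.
Proof.
rewrite limit_densityE adde_ge0 // ?mule_ge0 //.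
- by rewrite lee_fin divr_ge0 ?expR_ge0 // mulr_ge0 // ltW.
- by rewrite lee_fin ltW.
apply: integral_ge0 => s /= /[!in_itv] /andP[s_ge0 _].
rewrite lee_fin mulr_ge0 ?expR_ge0 //; case: ifP => // _.
by rewrite invr_ge0 mulr_ge0 // ltW.
Qed.

Lemma resetting_integral_cvgy :
  (\int[mu]_(s in `[0%R, t]) (expR (- xi * s) * p_ac v1 v2 lam x s)%:E)%E @[lam --> +oo] -->
  (\int[mu]_(s in `[0%R, t])
      (expR (- xi * s) * (if a < s then ((v1 - v2) * s)^-1 else 0))%:E)%E.
Proof.
pose F lam s := expR (- xi * s) *
  (if a < s then lam / ((v1 - v2) * (1 + lam * s)) else 0).
have -> : (fun lam => \int[mu]_(s in `[0%R, t]) (expR (- xi * s) * p_ac v1 v2 lam x s)%:E)%E =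
          (fun lam => \int[mu]_(s in `[0%R, t]) (F lam s)%:E)%E.
  apply/funext => lam; apply: eq_integral => s; rewrite mem_setE in_itv => s_in.
  by rewrite /F /p_ac inside_cone_entry_time.
apply: monotone_convergence_cvgy => //.
- move=> lam _; apply/measurable_EFinP/measurable_funTS.
  apply: measurable_funM; first exact: measurableT_comp.
  apply: measurable_fun_ifT.
  + by apply: measurable_fun_ltr; [exact: measurable_cst | exact: measurable_id].
  + apply: measurable_funM; first exact: measurable_cst.
    apply: measurableT_comp; first exact: measurable_invr.
    apply: measurable_funM; first exact: measurable_cst.
    apply: measurable_funD; first exact: measurable_cst.
    by apply: measurable_funM; [exact: measurable_cst | exact: measurable_id].
  + exact: measurable_cst.
- move=> lam s lam_ge0 /= /[!in_itv] /andP[s_ge0 _].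
  rewrite lee_fin mulr_ge0 ?expR_ge0 //; case: ifP => // _.
  by apply: divr_ge0 => //; rewrite mulr_ge0 ?(ltW K_gt0) // addr_ge0 // mulr_ge0.
- move=> s l1 l2 /= /[!in_itv] /andP[s_ge0 _] /andP[l1_ge0 l12].
  rewrite lee_fin; apply: ler_wpM2l; first exact: expR_ge0.
  case: ifP => // _; rewrite !invfM !(mulrCA _ (v1 - v2)^-1).
  by apply: ler_wpM2l; [rewrite invr_ge0 ltW | exact: ler_divr1DM].
- move=> s /= /[!in_itv] /andP[s_ge0 _]; apply: cvg_EFin; first exact: nearW.
  rewrite /F; case: ifPn => [a_lt_s|_]; last exact: cvg_cst.
  apply: cvgM; first exact: cvg_cst.
  by apply: divr1DM_cvgy; apply: le_lt_trans a_lt_s; exact: entry_time_ge0.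
Qed.

Lemma ptilde_cond_cvgy (vj : R) :
  ptilde_cond xi v1 v2 lam vj x t @[lam --> +oo] --> limit_density xi v1 v2 x t.
Proof.
rewrite limit_densityE -[X in _ --> X]adde0.
apply: cvgeD; first exact: fin_num_adde_defl.
  apply: cvgeD; first exact: fin_num_adde_defr.
    apply: cvg_EFin; first exact: nearW.
    rewrite /p_ac v2t_lt_x x_lt_v1t /=.
    by apply: cvgM; [exact: cvg_cst | exact: divr1DM_cvgy].
  by apply: cvgeZl => //; exact: resetting_integral_cvgy.
apply: cvg_EFin; first exact: nearW.
have L := cvgM (cvg_cst xi) (dirac_int_cvgy0 (fun s => expR (- xi * s)) vj x t).
rewrite mulr0 in L; exact: L.
Qed.

End resetting_telegraph_limit.

Theorem corollary4 (R : realType) (xi v1 v2 q t x : R) :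
  0 < xi -> v2 < v1 -> ((v2 < 0 < v1) \/ (0 < v2 < v1)) ->
  0 <= q <= 1 -> 0 < t -> v2 * t < x < v1 * t ->
  ptilde xi v1 v2 q lam x t @[lam --> +oo] --> limit_density xi v1 v2 x t.
Proof.
move=> xi_gt0 v2_lt_v1 v_cases /andP[q_ge0 q_le1] t_gt0 /andP[v2t_lt_x x_lt_v1t].
have [v1_gt0 v2_neq0] : 0 < v1 /\ v2 != 0.
  case: v_cases => /andP[v2_0 v_0]; first by rewrite lt_eqF.
  by rewrite gt_eqF // (lt_trans v2_0 v_0).
have cond_cvg := ptilde_cond_cvgy xi_gt0 v2_lt_v1 v1_gt0 v2_neq0 t_gt0 v2t_lt_x x_lt_v1t.
set L := limit_density xi v1 v2 x t in cond_cvg *.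
(* L may be +oo: nonnegativity keeps q L + (1 - q) L = L and the sum defined. *)
have L_ge0 : (0 <= L)%E :=
  limit_density_ge0 xi_gt0 v2_lt_v1 v1_gt0 v2_neq0 t_gt0 v2t_lt_x x_lt_v1t.
have q'_ge0 : (0 <= (1 - q)%:E)%E by rewrite lee_fin subr_ge0.
rewrite -[L]mul1e -[1%R](subrKC q) EFinD ge0_muleDl ?lee_fin //.
apply: cvgeD; first by rewrite ge0_adde_def // inE mule_ge0 ?lee_fin.
- by apply: cvgeZl => //; exact: cond_cvg.
- by apply: cvgeZl => //; exact: cond_cvg.
Qed.
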